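(* Let $\Gamma$ be a finite connected $d$-valent graph with a GKM axial function $\alpha$, a compatible connection $\theta$, and a polarizing vector $\xi$, and suppose $\Gamma$ admits a family of Thom classes $\{\tau_p^+\}_{p\in V_\Gamma}$ as in the context. Let $e$ be an ascending edge from $p$ to $q$. If $e$ is the only ascending path from $p$ to $q$, then $\sigma_q\le\sigma_p+1$.
   Context: $\mathfrak g$ is the Lie algebra of a torus $G$, $\mathfrak S(\mathfrak g^* )$ the polynomial ring on $\mathfrak g$, graded by degree. Oriented edges $e$ have initial vertex $i(e)$, terminal vertex $t(e)$, and reverse $\bar e$; $E_p=\{e:i(e)=p\}$. An axial function $\alpha:e\mapsto\alpha_e\in\mathfrak g^*$ satisfies $\alpha_{\bar e}=-\alpha_e$ and is GKM if for each $p$ the $\alpha_e$, $e\in E_p$, are pairwise linearly independent. A compatible connection assigns to each oriented $e$ a bijection $\theta_e:E_{i(e)}\to E_{t(e)}$ with $\theta_{\bar e}=\theta_e^{-1}$, $\theta_e(e)=\bar e$, and $\alpha_{\theta_e(e')}-\alpha_{e'}\in\mathbb R\alpha_e$ for $e'\in E_{i(e)}$. $H(\Gamma,\alpha)$ is the ring of maps $h:V_\Gamma\to\mathfrak S(\mathfrak g^* )$ with $\alpha_e\mid h(i(e))-h(t(e))$ for every edge; $H^k$ consists of those with values in degree-$k$ polynomials; it is a module over $\mathfrak S(\mathfrak g^* )$. $\xi\in\mathfrak g$ is polarizing if $\alpha_e(\xi)\ne0$ for all $e$; $e$ is ascending if $\alpha_e(\xi)>0$, descending otherwise; paths are ascending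 if all edges are. $\sigma_p$ = number of descending edges in $E_p$, $E_p^-$ the set of these; $F_p$ = vertices reachable from $p$ by an ascending path (including $p$). A family of Thom classes is a family $\tau_p^+\in H^{\sigma_p}(\Gamma,\alpha)$, $p\in V_\Gamma$, freely generating $H(\Gamma,\alpha)$ as an $\mathfrak S(\mathfrak g^* )$-module, with $\tau_p^+$ vanishing outside $F_p$ and $\tau_p^+(p)=\prod_{e\in E_p^-}\alpha_e$. *)

(* multinomials' mpoly for the polynomial ring S(g^* ) on g = R^n,
   with R : realType (MathComp's abstract model of the real numbers). *)
From HB Require Import structures.
From mathcomp Require Import all_boot all_order all_algebra.
From mathcomp Require Import reals.
From mathcomp Require Import mpoly.

Set Implicit Arguments.
Unset Strict Implicit.
Unset Printing Implicit Defensive.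

Import Order.TTheory GRing.Theory Num.Theory.
Local Open Scope ring_scope.

Section GKM.

Variables (R : realType) (n : nat).
(* g = R^n (row vectors 'rV_n); g^* is identified with row vectors too, via
   the pairing  <a, x> = \sum_i a_i x_i. *)
Variables (V E : finType) (src tgt : E -> V) (rev : E -> E).

Definition pair_gx (a x : 'rV[R]_n) : R := \sum_(j < n) a 0 j * x 0 j.

Definition linpoly (a : 'rV[R]_n) : {mpoly R[n]} := \sum_(j < n) a 0 j *: 'X_j.

Definition is_graph : Prop :=
  (forall e, rev (rev e) = e) /\ (forall e, rev e != e) /\
  (forall e, src (rev e) = tgt e).

Definition adj : rel V := fun u v => [exists e, (src e == u) && (tgt e == v)].

Definition connected_graph : Prop := forall u v : V, connect adj u v.

Definition Eat (p : V) : {set E} := [set e | src e == p].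

Definition valent (d : nat) : Prop := forall p : V, #|Eat p| = d.

Variable alpha : E -> 'rV[R]_n.

Definition axial : Prop := forall e, alpha (rev e) = - alpha e.

Definition pairwise_lin_indep (a b : 'rV[R]_n) : Prop :=
  forall c1 c2 : R, c1 *: a + c2 *: b = 0 -> c1 = 0 /\ c2 = 0.

Definition GKM_axial : Prop :=
  axial /\
  forall p e1 e2, e1 \in Eat p -> e2 \in Eat p -> e1 != e2 ->
    pairwise_lin_indep (alpha e1) (alpha e2).

(* compatible connection: theta e is a map E_{src e} -> E_{tgt e}, written
   theta e e' for e' in E_{src e} (its values outside E_{src e} are irrelevant) *)
Definition compatible_connection (theta : E -> E -> E) : Prop :=
  (forall e e', e' \in Eat (src e) -> theta e e' \in Eat (tgt e)) /\
  (forall e e', e' \in Eat (src e) -> theta (rev e) (theta e e') = e') /\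
  (forall e, theta e e = rev e) /\
  (forall e e', e' \in Eat (src e) ->
     exists c : R, alpha (theta e e') - alpha e' = c *: alpha e).

Definition in_H (h : V -> {mpoly R[n]}) : Prop :=
  forall e, exists c : {mpoly R[n]}, h (src e) - h (tgt e) = linpoly (alpha e) * c.

Definition in_Hk (k : nat) (h : V -> {mpoly R[n]}) : Prop :=
  in_H h /\ forall v, h v \is k.-homog.

Variable xi : 'rV[R]_n.

Definition polarizing : Prop := forall e, pair_gx (alpha e) xi != 0.

Definition ascending (e : E) : bool := 0 < pair_gx (alpha e) xi.
Definition descending (e : E) : bool := ~~ ascending e.

Definition Edesc (p : V) : {set E} := [set e | (src e == p) && descending e].
Definition sigma (p : V) : nat := #|Edesc p|.

Fixpoint epath (p q : V) (s : seq E) : bool :=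
  match s with
  | [::] => p == q
  | e :: s' => (src e == p) && epath (tgt e) q s'
  end.

Definition asc_path (p q : V) (s : seq E) : bool := epath p q s && all ascending s.

(* F_p : q is reachable from p by an ascending path (the empty path gives p) *)
Definition in_F (p q : V) : Prop := exists s : seq E, asc_path p q s.

Definition thom_family (tau : V -> V -> {mpoly R[n]}) : Prop :=
  [/\
      (forall p, in_Hk (sigma p) (tau p)),
      (forall h, in_H h ->
         exists f : V -> {mpoly R[n]}, forall v, h v = \sum_(p : V) f p * tau p v),
      (forall f g : V -> {mpoly R[n]},
         (forall v, \sum_(p : V) f p * tau p v = \sum_(p : V) g p * tau p v) ->
         forall p, f p = g p),
      (forall p q, ~ in_F p q -> tau p q = 0) &
      (forall p, tau p p = \prod_(e in Edesc p) linpoly (alpha e))].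

End GKM.

(* Let e' be a descending edge at q other than rev e.  An ascending path from p to
   the far end of e' would extend by rev e' to a second ascending path from p to q,
   so tau_p vanishes there and alpha_e' divides tau_p(q).  These sigma_q - 1 linear
   forms are pairwise independent, while tau_p(q) is homogeneous of degree sigma_p
   and nonzero: on ker alpha_e it agrees with tau_p(p), the product of the alpha of
   E_p^-, none of which is proportional to alpha_e.  On a generic line, tau_p(q)
   becomes a univariate polynomial of degree at most sigma_p with sigma_q - 1
   distinct roots. *)

From HB Require Import structures.
From mathcomp Require Import all_boot all_order all_algebra.
From mathcomp Require Import reals.
From mathcomp Require Import mpoly.
From mathcomp Require Import zify.
Import Order.TTheory GRing.Theory Num.Theory.
Local Open Scope ring_scope.
Set Implicit Arguments.
Unset Strict Implicit.
Unset Printing Implicit Defensive.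

Lemma exists_nonroot (R : numDomainType) (p : {poly R}) :
  p != 0 -> exists t, ~~ root p t.
Proof.
move=> p_nz; set ts := [seq i%:R : R | i <- iota 0 (size p)].
have /allPn[t _ ?] : ~~ all (root p) ts; last by exists t.
apply/negP => all_roots.
suff /(max_poly_roots p_nz all_roots) : uniq ts by rewrite size_map size_iota ltnn.
by rewrite map_inj_uniq ?iota_uniq // => i j /eqP; rewrite eqr_nat => /eqP.
Qed.

Section LineRestriction.
Variables (R : comNzRingType) (n : nat).

Definition restr_line (x v : 'rV[R]_n) (f : {mpoly R[n]}) : {poly R} :=
  mmap (@polyC R) (fun j => (x 0 j)%:P + (v 0 j)%:P * 'X) f.

Lemma horner_restr_line x v f s : (restr_line x v f).[s] = f.@[(x + s *: v) 0].
Proof.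
rewrite /restr_line /mmap mevalE horner_sum; apply: eq_bigr => m _.
rewrite hornerCM /mmap1 horner_prod; congr (_ * _); apply: eq_bigr => j _.
by rewrite horner_exp hornerD hornerMX !hornerC !mxE mulrC.
Qed.

Lemma size_mmap1_le (h : 'I_n -> {poly R}) (m : 'X_{1..n}) :
  (forall j, size (h j) <= 2)%N -> (size (mmap1 h m) <= (mdeg m).+1)%N.
Proof.
move=> h_lin; rewrite /mmap1 mdegE.
elim/big_rec2: _ => [|j q s _ size_q]; first by rewrite size_poly1.
apply: leq_trans (size_polyMleq _ _) _.
have size_hj : (size (h j ^+ m j) <= (m j).+1)%N.
  apply: leq_trans (size_poly_exp_leq _ _) _.
  by rewrite ltnS -[leqRHS]mul1n leq_mul2r; have := h_lin j; lia.
by rewrite -subn1 leq_subLR add1n -addnS -addSn leq_add.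
Qed.

Lemma size_restr_line_homog x v f k :
  f \is k.-homog -> (size (restr_line x v f) <= k.+1)%N.
Proof.
move=> f_homog; rewrite /restr_line /mmap big_seq.
elim/big_ind: _ => [|p1 p2 size1 size2|m m_supp]; first by rewrite size_poly0.
  by apply: leq_trans (size_polyD _ _) _; rewrite geq_max size1 size2.
rewrite mul_polyC; apply: leq_trans (size_scale_leq _ _) _.
rewrite -(dhomog_mf f_homog m_supp); apply: size_mmap1_le => j.
apply: leq_trans (size_polyD _ _) _; rewrite geq_max (leq_trans (size_polyC_leq1 _)) //.
by rewrite mul_polyC (leq_trans (size_scale_leq _ _)) ?size_polyX.
Qed.

End LineRestriction.

Section LinearForms.
Variables (R : realType) (n : nat).
Implicit Types (a b x y : 'rV[R]_n).

Lemma pairDl a b x : pair_gx (a + b) x = pair_gx a x + pair_gx b x.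
Proof. by rewrite /pair_gx -big_split; apply: eq_bigr => j _; rewrite mxE mulrDl. Qed.

Lemma pairZl c a x : pair_gx (c *: a) x = c * pair_gx a x.
Proof. by rewrite /pair_gx mulr_sumr; apply: eq_bigr => j _; rewrite mxE mulrA. Qed.

Lemma pairDr a x y : pair_gx a (x + y) = pair_gx a x + pair_gx a y.
Proof. by rewrite /pair_gx -big_split; apply: eq_bigr => j _; rewrite mxE mulrDr. Qed.

Lemma pairZr c a x : pair_gx a (c *: x) = c * pair_gx a x.
Proof. by rewrite /pair_gx mulr_sumr; apply: eq_bigr => j _; rewrite mxE mulrCA. Qed.

Lemma pairNl a x : pair_gx (- a) x = - pair_gx a x.
Proof. by rewrite -scaleN1r pairZl mulN1r. Qed.

Lemma pairBl a b x : pair_gx (a - b) x = pair_gx a x - pair_gx b x.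
Proof. by rewrite pairDl pairNl. Qed.

Lemma pairBr a x y : pair_gx a (x - y) = pair_gx a x - pair_gx a y.
Proof. by rewrite -scaleN1r pairDr pairZr mulN1r. Qed.

Lemma pair0l x : pair_gx 0 x = 0.
Proof. by rewrite -(scale0r 0) pairZl mul0r. Qed.

Lemma meval_linpoly a x : (linpoly a).@[x 0] = pair_gx a x.
Proof.
rewrite /linpoly raddf_sum; apply: eq_bigr => j _.
rewrite -(mevalXU (x 0) j); exact: mevalZ.
Qed.

(* The moment curve t |-> (t^j)_j meets the kernel of a nonzero form in finitely
   many points. *)
Lemma exists_row_avoiding_kernels (I : finType) (P : pred I) (a : I -> 'rV[R]_n) :
  (forall i, P i -> a i != 0) -> exists x, forall i, P i -> pair_gx (a i) x != 0.
Proof.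
move=> a_nz; pose moment (t : R) : 'rV[R]_n := \row_(j < n) t ^+ j.
have pair_moment i t : pair_gx (a i) (moment t) = (rVpoly (a i)).[t].
  by rewrite horner_poly; apply: eq_bigr => j _; rewrite valK mxE.
have poly_nz i : P i -> rVpoly (a i) != 0.
  by move=> /a_nz; rewrite raddf_eq0 //; apply: can_inj rVpolyK.
have [t] := exists_nonroot (introT (prodf_neq0 P _) poly_nz).
rewrite /root horner_prod => /prodf_neq0 t_nonroot.
by exists (moment t) => i Pi; rewrite pair_moment t_nonroot.
Qed.

Lemma exists_row_nonzero a : a != 0 -> exists x, pair_gx a x != 0.
Proof.
move=> a_nz.
have [x x_nz] := @exists_row_avoiding_kernels unit predT (fun=> a) (fun _ _ => a_nz).
by exists x; apply: (x_nz tt).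
Qed.

Lemma exists_kernel_row_avoiding (I : finType) (P : pred I) a (b : I -> 'rV[R]_n) :
  a != 0 -> (forall i, P i -> pairwise_lin_indep (b i) a) ->
  exists x, pair_gx a x = 0 /\ forall i, P i -> pair_gx (b i) x != 0.
Proof.
move=> /exists_row_nonzero[y ay_nz] b_indep.
pose r i := pair_gx (b i) y / pair_gx a y.
have [w w_avoid] : exists w, forall i, P i -> pair_gx (b i - r i *: a) w != 0.
  apply: exists_row_avoiding_kernels => i /b_indep indep; apply/eqP => proportional.
  have [] := indep 1 (- r i); first by rewrite scale1r scaleNr.
  by move/eqP; rewrite oner_eq0.
exists (w - (pair_gx a w / pair_gx a y) *: y); split.
  by rewrite pairBr pairZr divfK // subrr.
move=> i /w_avoid; rewrite pairBl pairZl pairBr pairZr /r.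
by rewrite mulrAC [pair_gx a w / _ * _]mulrAC [pair_gx a w * _]mulrC.
Qed.

Lemma exists_row_separating (I : finType) (D : {set I}) (a : I -> 'rV[R]_n) x :
  {in D, forall i, pair_gx (a i) x != 0} ->
  {in D &, forall i j, i != j -> pairwise_lin_indep (a i) (a j)} ->
  exists v, {in D, forall i, pair_gx (a i) v != 0} /\
            {in D &, injective (fun i => pair_gx (a i) x / pair_gx (a i) v)}.
Proof.
move=> ax_nz indep.
pose cross (ij : I * I) :=
  if ij.1 == ij.2 then a ij.1
  else pair_gx (a ij.1) x *: a ij.2 - pair_gx (a ij.2) x *: a ij.1.
have [v v_avoid] : exists v, forall ij,
    (ij.1 \in D) && (ij.2 \in D) -> pair_gx (cross ij) v != 0.
  apply: exists_row_avoiding_kernels => -[i j] /andP[/= Di Dj]; rewrite /cross /=.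
  have [->|ij] := eqVneq i j.
    by apply: contra_neq (ax_nz j Dj) => ->; rewrite pair0l.
  apply/eqP => /eqP; rewrite subr_eq0 => /eqP cross0.
  have := indep i j Di Dj ij (- pair_gx (a j) x) (pair_gx (a i) x).
  rewrite scaleNr cross0 addNr => /(_ erefl)[_ ai0].
  by move: (ax_nz i Di); rewrite ai0 eqxx.
have av_nz i : i \in D -> pair_gx (a i) v != 0.
  by move=> Di; have := v_avoid (i, i); rewrite /cross /= eqxx Di; apply.
exists v; split => // i j Di Dj /= eq_ratio; apply/eqP; apply: contraT => ij.
have := v_avoid (i, j); rewrite /cross /= (negbTE ij) Di Dj pairBl !pairZl => /(_ isT).
move/eqP: eq_ratio; rewrite eqr_div ?av_nz // => /eqP ->.
by rewrite subrr eqxx.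
Qed.

(* Restricted to a generic line through x, f becomes a nonzero univariate polynomial of
   degree at most k having a distinct root on each hyperplane ker (a i). *)
Lemma card_linear_divisors_le (I : finType) (D : {set I}) (a : I -> 'rV[R]_n)
    (f : {mpoly R[n]}) k x :
  f \is k.-homog -> f.@[x 0] != 0 ->
  {in D, forall i, exists g, f = linpoly (a i) * g} ->
  {in D &, forall i j, i != j -> pairwise_lin_indep (a i) (a j)} ->
  (#|D| <= k)%N.
Proof.
move=> f_homog fx_nz a_dvd indep.
have ax_nz : {in D, forall i, pair_gx (a i) x != 0}.
  move=> i /a_dvd[g f_eq]; apply: contra_neq fx_nz => ax0.
  by rewrite f_eq mevalM meval_linpoly ax0 mul0r.
have [v [av_nz ratio_inj]] := exists_row_separating ax_nz indep.
pose psi := restr_line x v f.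
have psi_nz : psi != 0.
  apply: contra_neq fx_nz => psi0.
  by have := horner_restr_line x v f 0; rewrite scale0r addr0 -/psi psi0 horner0.
pose root_on i := - (pair_gx (a i) x / pair_gx (a i) v).
have psi_root i : i \in D -> root psi (root_on i).
  move=> Di; have [g f_eq] := a_dvd i Di.
  rewrite /root horner_restr_line f_eq mevalM meval_linpoly pairDr pairZr /root_on.
  by rewrite mulNr divfK ?av_nz // addrN mul0r.
have roots_uniq : uniq [seq root_on i | i <- enum D].
  rewrite map_inj_in_uniq ?enum_uniq // => i j; rewrite !mem_enum => Di Dj /oppr_inj.
  exact: ratio_inj.
have all_roots : all (root psi) [seq root_on i | i <- enum D].
  by apply/allP => _ /mapP[i Di ->]; rewrite mem_enum in Di; apply: psi_root.
rewrite -ltnS cardE -(size_map root_on).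
apply: leq_trans (max_poly_roots psi_nz all_roots roots_uniq) _.
exact: size_restr_line_homog.
Qed.

End LinearForms.

Lemma epath_cat (V E : finType) (src tgt : E -> V) (s t : seq E) p r q :
  epath src tgt p r s -> epath src tgt r q t -> epath src tgt p q (s ++ t).
Proof.
elim: s p => [|e s IHs] p /=; first by move=> /eqP ->.
by case/andP=> -> /IHs path_t /path_t.
Qed.

Section AscendingPaths.
Variables (R : realType) (n : nat) (V E : finType).
Variables (src tgt : E -> V) (rev : E -> E) (alpha : E -> 'rV[R]_n) (xi : 'rV[R]_n).
Hypotheses (graph : is_graph src tgt rev) (alpha_axial : axial rev alpha).
Hypothesis xi_polarizing : polarizing alpha xi.

Lemma ascending_rev e : ascending alpha xi (rev e) = descending alpha xi e.
Proof.
rewrite /descending /ascending alpha_axial pairNl oppr_gt0 ltNge le_eqVlt eq_sym.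
by rewrite (negbTE (xi_polarizing e)).
Qed.

(* An ascending path to the far end of e' extends by rev e' to a second ascending
   path from p to q. *)
Lemma unique_asc_path_not_in_F e p q e' :
  (forall s, asc_path src tgt alpha xi p q s -> s = [:: e]) ->
  e' \in Edesc src alpha xi q -> e' != rev e -> ~ in_F src tgt alpha xi p (tgt e').
Proof.
have [revK [_ src_rev]] := graph.
move=> e_unique desc_e' ne' [s /andP[path_s asc_s]].
move: desc_e'; rewrite inE => /andP[/eqP src_e' desc_e'].
have : asc_path src tgt alpha xi p q (rcons s (rev e')).
  rewrite /asc_path -cats1 all_cat asc_s /= ascending_rev desc_e' !andbT.
  apply: epath_cat path_s _.
  by rewrite /= src_rev -[tgt (rev _)]src_rev revK src_e' !eqxx.
case: s {path_s asc_s} => [|e1 s] /e_unique; last by move/(congr1 size); rewrite size_rcons.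
by case=> rev_e'; move: ne'; rewrite -rev_e' revK eqxx.
Qed.

End AscendingPaths.

(* h (tgt e) and h (src e) agree on ker (alpha e), where the factors of h (src e)
   can be made nonzero. *)
Lemma exists_nonvanishing_at_tgt (R : realType) (n : nat) (V E : finType)
    (src tgt : E -> V) (rev : E -> E) (alpha : E -> 'rV[R]_n)
    (h : V -> {mpoly R[n]}) (e : E) (S : {set E}) :
  GKM_axial src rev alpha -> alpha e != 0 -> S \subset Eat src (src e) -> e \notin S ->
  in_H src tgt alpha h -> h (src e) = \prod_(e1 in S) linpoly (alpha e1) ->
  exists x : 'rV[R]_n, (h (tgt e)).@[x 0] != 0.
Proof.
move=> [_ indep] ae_nz /subsetP sub_S eNS h_H h_src.
have e_at : e \in Eat src (src e) by rewrite inE.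
have [x [aex0 S_nz]] : exists x, pair_gx (alpha e) x = 0 /\
    forall e1, e1 \in S -> pair_gx (alpha e1) x != 0.
  apply: (exists_kernel_row_avoiding (P := fun e1 => e1 \in S) ae_nz) => e1 Se1.
  by apply: indep (sub_S _ Se1) e_at _; apply: contraNneq eNS => <-.
exists x; have [c h_dvd] := h_H e.
have : (h (src e) - h (tgt e)).@[x 0] = 0 by rewrite h_dvd mevalM meval_linpoly aex0 mul0r.
rewrite mevalB => /eqP; rewrite subr_eq0 => /eqP <-.
by rewrite h_src rmorph_prod; apply/prodf_neq0 => e1 Se1; rewrite /= meval_linpoly S_nz.
Qed.

Theorem theorem4p2 (R : realType) (n : nat) (V E : finType)
  (src tgt : E -> V) (rev : E -> E) (d : nat)
  (alpha : E -> 'rV[R]_n) (theta : E -> E -> E) (xi : 'rV[R]_n)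
  (tau : V -> V -> {mpoly R[n]}) :
  is_graph src tgt rev ->
  connected_graph src tgt ->
  valent src d ->
  GKM_axial src rev alpha ->
  compatible_connection src tgt rev alpha theta ->
  polarizing alpha xi ->
  thom_family src tgt alpha xi tau ->
  forall (e : E) (p q : V),
    src e = p -> tgt e = q -> ascending alpha xi e ->
    (forall s : seq E, asc_path src tgt alpha xi p q s -> s = [:: e]) ->
    (sigma src alpha xi q <= (sigma src alpha xi p).+1)%N.
Proof.
move=> graph _ _ gkm _ pol [thom_H _ _ thom_supp thom_norm] e p q <- <- e_asc e_unique.
have [alpha_axial indep] := gkm; have [revK [_ src_rev]] := graph.
have rev_desc : rev e \in Edesc src alpha xi (tgt e).
  by rewrite inE src_rev eqxx -(ascending_rev alpha_axial pol) revK e_asc.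
have [tau_H tau_homog] := thom_H (src e).
have ae_nz : alpha e != 0 by apply: contra_neq (pol e) => ->; rewrite pair0l.
have [x tau_nz] : exists x : 'rV[R]_n, (tau (src e) (tgt e)).@[x 0] != 0.
  apply: exists_nonvanishing_at_tgt gkm ae_nz _ _ tau_H (thom_norm _).
    by apply/subsetP => e1; rewrite !inE => /andP[].
  by rewrite inE /descending e_asc andbF.
rewrite /sigma (cardsD1 (rev e)) rev_desc add1n ltnS.
apply: (card_linear_divisors_le (a := alpha) (tau_homog (tgt e)) tau_nz) => [e1 | e1 e2].
  rewrite in_setD1 => /andP[ne1 desc1].
  have tau0 := thom_supp _ _
    (unique_asc_path_not_in_F graph alpha_axial pol e_unique desc1 ne1).
  move: desc1; rewrite inE => /andP[/eqP src1 _].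
  by have [c tau_dvd] := tau_H e1; exists c; rewrite -src1 -tau_dvd tau0 subr0.
rewrite !in_setD1 !inE => /and3P[_ /eqP src1 _] /and3P[_ /eqP src2 _].
by apply: indep; rewrite inE ?src1 ?src2.
Qed.
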